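(* Let $\hat{x}$ be the final value of the vector $x$ in Algorithm 1. If $\|\hat{x}\|_1=k$, then $F(\hat{x})\ge c\tau$.
   Context: Setting: finite ground set $N$ whose elements arrive one at a time in a stream, non-negative submodular $f\colon 2^N\to\mathbb{R}_{\ge 0}$, positive integer $k$. $F$ is the multilinear extension of $f$: $F(x)=\sum_{A\subseteq N} f(A)\prod_{u\in A}x_u\prod_{u\notin A}(1-x_u)$ for $x\in[0,1]^N$, and $\partial_uF(x)=F(x\vee \mathbf{1}_u)-F(x\wedge\mathbf{1}_{N\setminus\{u\}})$ (coordinatewise max/min with characteristic vectors). $\mathrm{supp}(x)=\{u: x_u>0\}$. Algorithm 1 has parameters $p\in(0,1)$, $c>0$, $\alpha\in(0,1]$ and a number $\tau$ (an estimate of the optimal value). It starts with $x=\mathbf{0}$, and when an element $u$ arrives, if $\partial_uF(x)\ge c\tau/k$ it sets $x\leftarrow x+\min\{p,\,k-\|x\|_1\}\cdot\mathbf{1}_u$ (otherwise $x$ is unchanged). After the stream ends, it computes a random set $S_1$ with $|S_1|\le k$ and $\mathbb{E}[f(S_1)]\ge F(x)$ (by rounding $x$), and a random set $S_2\subseteq\mathrm{supp}(x)$ with $|S_2|\le k$ and $\mathbb{E}[f(S_2)]\ge\alpha\cdot\max_{S\subseteq\mathrm{supp}(x),|S|\le k}f(S)$, and outputs the better of $S_1,S_2$. *)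

From mathcomp Require Import all_boot all_order all_algebra.
Set Implicit Arguments. Unset Strict Implicit. Unset Printing Implicit Defensive.
Import Order.TTheory GRing.Theory Num.Theory.
Local Open Scope ring_scope.

Section Defs.
Variables (T : finType) (R : realFieldType).

Definition nonneg_setfun (f : {set T} -> R) : Prop := forall A, 0 <= f A.
Definition submodular (f : {set T} -> R) : Prop :=
  forall A B, f (A :|: B) + f (A :&: B) <= f A + f B.

Definition multilinear_ext (f : {set T} -> R) (x : T -> R) : R :=
  \sum_(A : {set T}) f A * (\prod_(u in A) x u) * (\prod_(u in ~: A) (1 - x u)).

Definition charvec (A : {set T}) : T -> R := fun v => if v \in A then 1 else 0.
Definition vjoin (x y : T -> R) : T -> R := fun v => Num.max (x v) (y v).
Definition vmeet (x y : T -> R) : T -> R := fun v => Num.min (x v) (y v).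

Definition partialF (f : {set T} -> R) (u : T) (x : T -> R) : R :=
  multilinear_ext f (vjoin x (charvec [set u]))
  - multilinear_ext f (vmeet x (charvec (~: [set u]))).

Definition l1norm (x : T -> R) : R := \sum_(u : T) `|x u|.

Definition alg1_step (f : {set T} -> R) (k : nat) (p c tau : R)
    (x : T -> R) (u : T) : T -> R :=
  if c * tau / k%:R <= partialF f u x
  then (fun v => x v + Num.min p (k%:R - l1norm x) * charvec [set u] v)
  else x.

Definition alg1_final (f : {set T} -> R) (k : nat) (p c tau : R)
    (s : seq T) : T -> R :=
  foldl (alg1_step f k p c tau) (fun _ => 0) s.

End Defs.

(* Every element u accepted by the algorithm raises x_u by some d >= 0, which
   raises ||x||_1 by d and, F being affine in each coordinate, raises F(x) by
   exactly d * d_uF(x) >= d * c tau / k.  Since each element arrives once, its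
   coordinate is still 0 on arrival and stays in [0, p], so this bookkeeping is
   valid throughout, and F(x) >= F(0) + ||x||_1 * c tau / k holds for the final
   x.  With ||x||_1 = k and F(0) = f(emptyset) >= 0 this gives F(x) >= c tau. *)
From mathcomp Require Import all_boot all_order all_algebra.
From mathcomp Require Import ring lra.
Import Order.TTheory GRing.Theory Num.Theory.
Local Open Scope ring_scope.

Section MultilinearExtension.
Context {T : finType} {R : realFieldType}.
Variable f : {set T} -> R.

Definition vupd (x : T -> R) (u : T) (a : R) : T -> R :=
  fun v => if v == u then a else x v.

Lemma eq_multilinear_ext (x y : T -> R) : x =1 y ->
  multilinear_ext f x = multilinear_ext f y.
Proof.
move=> xy; apply: eq_bigr => A _.
by congr (_ * _ * _); apply: eq_bigr => v _; rewrite xy.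
Qed.

Lemma prod_vupd_neq (g : R -> R) (P : pred T) (x : T -> R) (u : T) (a : R) :
  \prod_(v | P v && (v != u)) g (vupd x u a v) = \prod_(v | P v && (v != u)) g (x v).
Proof. by apply: eq_bigr => v /andP[_ /negbTE vu]; rewrite /vupd vu. Qed.

Lemma prod_vupd_notin (g : R -> R) (A : {set T}) (x : T -> R) (u : T) (a : R) :
  u \notin A -> \prod_(v in A) g (vupd x u a v) = \prod_(v in A) g (x v).
Proof.
move=> uA; apply: eq_bigr => v vA; rewrite /vupd.
by case: eqP vA => // ->; rewrite (negbTE uA).
Qed.

Lemma multilinear_ext_term_split (A : {set T}) (x : T -> R) (u : T) :
  f A * (\prod_(v in A) x v) * (\prod_(v in ~: A) (1 - x v)) =
  x u * (f A * (\prod_(v in A) vupd x u 1 v) * (\prod_(v in ~: A) (1 - vupd x u 1 v)))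
  + (1 - x u) * (f A * (\prod_(v in A) vupd x u 0 v)
                     * (\prod_(v in ~: A) (1 - vupd x u 0 v))).
Proof.
case uA: (u \in A).
- have uNC : u \notin ~: A by rewrite in_setC uA.
  rewrite !(prod_vupd_notin (fun a => 1 - a) _ _ _ _ uNC) !(bigD1 u uA) /=.
  by rewrite !(prod_vupd_neq id) /vupd eqxx; ring.
- have uC : u \in ~: A by rewrite in_setC uA.
  rewrite !(prod_vupd_notin id _ _ _ _ (negbT uA)) !(bigD1 u uC) /=.
  by rewrite !(prod_vupd_neq (fun a => 1 - a)) /vupd eqxx; ring.
Qed.

Lemma multilinear_ext_split (x : T -> R) (u : T) :
  multilinear_ext f x = x u * multilinear_ext f (vupd x u 1)
    + (1 - x u) * multilinear_ext f (vupd x u 0).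
Proof.
rewrite /multilinear_ext !mulr_sumr -big_split /=; apply: eq_bigr => A _.
by rewrite (multilinear_ext_term_split A x u) !mulrA.
Qed.

Lemma partialF_vupd (x : T -> R) (u : T) : (forall v, 0 <= x v <= 1) ->
  partialF f u x = multilinear_ext f (vupd x u 1) - multilinear_ext f (vupd x u 0).
Proof.
move=> x01; congr (_ - _); apply: eq_multilinear_ext => v;
  rewrite /vjoin /vmeet /vupd /charvec ?in_setC in_set1;
  have /andP[x0 x1] := x01 v; case: (v == u) => /=.
- by rewrite max_r.
- by rewrite max_l.
- by rewrite min_r.
- by rewrite min_l.
Qed.

Lemma multilinear_ext_add_charvec (x : T -> R) (u : T) (d : R) :
  (forall v, 0 <= x v <= 1) ->
  multilinear_ext f (fun v => x v + d * charvec R [set u] v) =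
  multilinear_ext f x + d * partialF f u x.
Proof.
move=> x01; rewrite partialF_vupd // (multilinear_ext_split _ u).
rewrite [in RHS](multilinear_ext_split x u).
have vupd_shift a : multilinear_ext f (vupd (fun v => x v + d * charvec R [set u] v) u a)
    = multilinear_ext f (vupd x u a).
  apply: eq_multilinear_ext => v; rewrite /vupd /charvec in_set1.
  by case: (v == u); rewrite ?mulr0 ?addr0.
by rewrite !vupd_shift /charvec in_set1 eqxx; ring.
Qed.

Lemma multilinear_ext0_ge0 : nonneg_setfun f -> 0 <= multilinear_ext f (fun _ => 0).
Proof.
move=> f_ge0; apply: sumr_ge0 => A _.
rewrite !mulr_ge0 ?prodr_ge0 // => v _.
by rewrite subr0.
Qed.

End MultilinearExtension.

Lemma l1norm_ge0E {T : finType} {R : realFieldType} (x : T -> R) :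
  (forall v, 0 <= x v) -> l1norm x = \sum_v x v.
Proof. by move=> x_ge0; apply: eq_bigr => v _; rewrite ger0_norm. Qed.

Section Algorithm1.
Context {T : finType} {R : realFieldType}.
Variables (f : {set T} -> R) (k : nat) (p c tau : R).
Hypotheses (p_gt0 : 0 < p) (p_le1 : p <= 1).

Local Notation step := (alg1_step f k p c tau).

Lemma alg1_step_neq (x : T -> R) (u v : T) : v != u -> step x u v = x v.
Proof.
rewrite /alg1_step => vu; case: ifP => // _.
by rewrite /charvec in_set1 (negbTE vu) mulr0 addr0.
Qed.

Definition alg1_inv (x : T -> R) : Prop :=
  [/\ forall v, 0 <= x v <= p, \sum_v x v <= k%:R &
      multilinear_ext f (fun _ => 0) + (\sum_v x v) * (c * tau / k%:R)
        <= multilinear_ext f x].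

Lemma alg1_inv0 : alg1_inv (fun _ => 0).
Proof.
rewrite /alg1_inv big1 // mul0r addr0 ler0n; split=> // v.
by rewrite lexx ltW.
Qed.

Lemma alg1_step_inv (x : T -> R) (u : T) :
  alg1_inv x -> x u = 0 -> alg1_inv (step x u).
Proof.
move=> [x0p sum_le_k F_ge] xu0.
have x01 v : 0 <= x v <= 1.
  by have /andP[-> xp] := x0p v; exact: le_trans xp p_le1.
rewrite /alg1_step l1norm_ge0E => [|v]; last by case/andP: (x0p v).
case: ifP => // above_threshold.
set d := Num.min p (k%:R - \sum_v x v).
have d_ge0 : 0 <= d by rewrite le_min (ltW p_gt0) subr_ge0.
have d_lep : d <= p by rewrite ge_min lexx.
have d_le_slack : d <= k%:R - \sum_v x v by rewrite ge_min lexx orbT.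
have sum_step : \sum_v (x v + d * charvec R [set u] v) = \sum_v x v + d.
  rewrite big_split /= -mulr_sumr; congr (_ + _).
  rewrite (bigD1 u) //= big1 => [|v vu].
    by rewrite /charvec in_set1 eqxx addr0 mulr1.
  by rewrite /charvec in_set1 (negbTE vu).
split.
- move=> v; rewrite /charvec in_set1; case: eqP => [->|_].
    by rewrite xu0 add0r mulr1 d_ge0.
  by rewrite mulr0 addr0.
- by rewrite sum_step; lra.
- rewrite sum_step multilinear_ext_add_charvec //.
  have : d * (c * tau / k%:R) <= d * partialF f u x by exact: ler_wpM2l.
  lra.
Qed.

Lemma alg1_foldl_inv (s : seq T) (x : T -> R) :
  uniq s -> (forall v, v \in s -> x v = 0) -> alg1_inv x ->
  alg1_inv (foldl step x s).
Proof.
elim: s x => [|u s IHs] x //= /andP[us uniq_s] s_zero x_inv.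
apply: IHs => // [v vs|]; last by apply: alg1_step_inv; rewrite // s_zero ?mem_head.
rewrite alg1_step_neq; first by rewrite s_zero // in_cons vs orbT.
by apply: contraNneq us => <-.
Qed.

End Algorithm1.

Theorem lemma3p3 (T : finType) (R : realFieldType)
  (f : {set T} -> R) (k : nat) (p c tau : R) (s : seq T) :
  nonneg_setfun f -> submodular f -> (0 < k)%N ->
  0 < p < 1 -> 0 < c ->
  uniq s -> (forall u : T, u \in s) ->
  l1norm (alg1_final f k p c tau s) = k%:R ->
  c * tau <= multilinear_ext f (alg1_final f k p c tau s).
Proof.
move=> f_ge0 _ k_gt0 /andP[p_gt0 p_lt1] _ uniq_s _.
have [x0p _ F_ge] : alg1_inv f k p c tau (alg1_final f k p c tau s).
  apply: alg1_foldl_inv => //; last exact: alg1_inv0.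
  exact: ltW.
rewrite l1norm_ge0E => [norm_k|v]; last by case/andP: (x0p v).
have k_neq0 : (k%:R : R) != 0 by rewrite pnatr_eq0 -lt0n.
have : k%:R * (c * tau / k%:R) = c * tau by rewrite mulrCA divff // mulr1.
have F0_ge0 : 0 <= multilinear_ext f (fun _ => 0) by exact: multilinear_ext0_ge0.
rewrite norm_k in F_ge; lra.
Qed.
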